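(* Let $d\ge2$, $l>0$, $\lambda\ne0$, and constants $a,b\in\mathbb R$, $b>0$, $z_0\in\mathbb R^d$. On $\mathbb H_{d+1}$ with metric $ds^2=\frac{l^2}{z^2}(dz^2+dz^idz^i)$, $z>0$, define on the set where the right-hand side is positive $$\phi^{2/(d-1)}=\frac{d-1}{l\sqrt{|\lambda|}}\,\frac{bz}{-\mathrm{sgn}(\lambda)b^2+(z+a)^2+|\vec z-\vec z_0|^2}.$$ Then $\mathcal T_{\mu\nu}=0$, $R_{\mu\nu}+\frac d{l^2}g_{\mu\nu}=0$ and $\square_g\phi-\frac{d-1}{4d}R\phi-\frac{d+1}{d-1}\lambda\phi^{\frac{d+3}{d-1}}=0$, so $(g,\phi)$ solves the equations of motion of the conformally coupled scalar. Moreover, with $z=e^{-r/l}$, as $r\to\infty$, $$\phi=e^{-\frac{(d-1)r}{2l}}\phi_-(\vec z)-l\alpha\,e^{-\frac{(d+1)r}{2l}}\phi_-(\vec z)^{\frac{d+1}{d-1}}+\dots,\qquad \alpha=\frac{\sqrt{|\lambda|}\,a}{b},\qquad \phi_-^{2/(d-1)}=\frac{d-1}{l\sqrt{|\lambda|}}\frac{b}{-\mathrm{sgn}(\lambda)b^2+a^2+|\vec z-\vec z_0|^2},$$ so that $\hat\pi_{(\Delta_+)}:=-\frac1l\phi_+=\alpha\phi_-^{\frac{d+1}{d-1}}$ and the solution satisfies the mixed boundary condition $-\hat\pi_{(\Delta_+)}-f'(\phi_-)=0$ with $f(\phi_-)=-\alpha\frac{d-1}{2d}\phi_-^{\frac{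2d}{d-1}}$.
   Context: $\mathcal T_{\mu\nu}=\frac{(d-1)^2}{4d}\frac{\phi^{2d/(d-1)}}{1-\frac{(d-1)\kappa^2}{4d}\phi^2}\big(\nabla_\mu\nabla_\nu-\frac1{d+1}g_{\mu\nu}\square_g\big)\phi^{-2/(d-1)}$. The equations of motion of the conformally coupled scalar (action $\int\sqrt g(-\frac{1}{2\kappa^2}(R+\frac{d(d-1)}{l^2})+\frac12(\partial\phi)^2+\frac{d-1}{8d}R\phi^2+\frac\lambda2\phi^{2(d+1)/(d-1)})$) are $R_{\mu\nu}+\frac d{l^2}g_{\mu\nu}=\kappa^2\mathcal T_{\mu\nu}$ and $\square_g\phi-\frac{d-1}{4d}R\phi-\frac{d+1}{d-1}\lambda\phi^{(d+3)/(d-1)}=0$. $\phi_+$ denotes the coefficient of $e^{-(d+1)r/2l}$ in the expansion. *)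

From HB Require Import structures.
From mathcomp Require Import all_boot all_order all_algebra.
From mathcomp Require Import all_classical all_reals all_analysis.
Unset Printing Implicit Defensive.
Import Order.TTheory GRing.Theory Num.Theory.
Import numFieldNormedType.Exports.
Local Open Scope ring_scope.
Local Open Scope classical_set_scope.

(* Coordinates on an n-dimensional chart are row vectors x : 'rV[R]_n;
   coordinate mu is x ord0 mu.  A metric is given by its component matrix
   g x : 'M_n at each point. *)

Definition pd {R : realType} {n : nat} (f : 'rV[R]_n -> R) (i : 'I_n)
  (x : 'rV[R]_n) : R := 'D_(delta_mx 0 i) f x.

Definition ginv {R : realType} {n : nat} (g : 'rV[R]_n -> 'M[R]_n)
  (x : 'rV[R]_n) : 'M[R]_n := invmx (g x).

Definition christoffel {R : realType} {n : nat} (g : 'rV[R]_n -> 'M[R]_n)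
  (k i j : 'I_n) (x : 'rV[R]_n) : R :=
  2^-1 * \sum_(m < n) ginv g x k m *
    (pd (fun y => g y m j) i x + pd (fun y => g y m i) j x
     - pd (fun y => g y i j) m x).

Definition ricci {R : realType} {n : nat} (g : 'rV[R]_n -> 'M[R]_n)
  (i j : 'I_n) (x : 'rV[R]_n) : R :=
  \sum_(k < n) (pd (christoffel g k i j) k x - pd (christoffel g k i k) j x
    + \sum_(m < n) (christoffel g k k m x * christoffel g m i j x
                    - christoffel g k j m x * christoffel g m i k x)).

Definition scalar_curv {R : realType} {n : nat} (g : 'rV[R]_n -> 'M[R]_n)
  (x : 'rV[R]_n) : R :=
  \sum_(i < n) \sum_(j < n) ginv g x i j * ricci g i j x.

Definition hess {R : realType} {n : nat} (g : 'rV[R]_n -> 'M[R]_n)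
  (f : 'rV[R]_n -> R) (i j : 'I_n) (x : 'rV[R]_n) : R :=
  pd (pd f j) i x - \sum_(k < n) christoffel g k i j x * pd f k x.

Definition box {R : realType} {n : nat} (g : 'rV[R]_n -> 'M[R]_n)
  (f : 'rV[R]_n -> R) (x : 'rV[R]_n) : R :=
  \sum_(i < n) \sum_(j < n) ginv g x i j * hess g f i j x.

Definition stressT {R : realType} (d : nat) (kappa : R)
  (g : 'rV[R]_d.+1 -> 'M[R]_d.+1) (phi : 'rV[R]_d.+1 -> R)
  (mu nu : 'I_d.+1) (x : 'rV[R]_d.+1) : R :=
  let dd := (d%:R : R) in
  let psi := fun y => phi y `^ (- (2 / (dd - 1))) in
  (dd - 1) ^+ 2 / (4 * dd) * phi x `^ (2 * dd / (dd - 1))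
    / (1 - (dd - 1) * kappa ^+ 2 / (4 * dd) * phi x ^+ 2)
  * (hess g psi mu nu x - (dd + 1)^-1 * g x mu nu * box g psi x).

(* Poincare coordinates on H_{d+1}: x ord0 ord0 = z, x ord0 (lift ord0 i) = z^i *)
Definition zc {R : realType} {d : nat} (x : 'rV[R]_d.+1) : R := x ord0 ord0.
Definition zvec {R : realType} {d : nat} (x : 'rV[R]_d.+1) : 'rV[R]_d :=
  \row_(i < d) x ord0 (lift ord0 i).
Definition pt {R : realType} {d : nat} (z : R) (zv : 'rV[R]_d) : 'rV[R]_d.+1 :=
  \row_(i < d.+1) (if unlift ord0 i is Some j then zv ord0 j else z).

Definition dist2 {R : realType} {d : nat} (v w : 'rV[R]_d) : R :=
  \sum_(i < d) (v ord0 i - w ord0 i) ^+ 2.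

Definition hypmetric {R : realType} {d : nat} (l : R) (x : 'rV[R]_d.+1)
  : 'M[R]_d.+1 := (l ^+ 2 / zc x ^+ 2)%:M.

Definition Fsol {R : realType} (d : nat) (l lambda a b : R) (z0 : 'rV[R]_d)
  (x : 'rV[R]_d.+1) : R :=
  (d%:R - 1) / (l * Num.sqrt `|lambda|) *
  (b * zc x / (- Num.sg lambda * b ^+ 2 + (zc x + a) ^+ 2 + dist2 (zvec x) z0)).

Definition phisol {R : realType} (d : nat) (l lambda a b : R) (z0 : 'rV[R]_d)
  (x : 'rV[R]_d.+1) : R :=
  Fsol d l lambda a b z0 x `^ ((d%:R - 1) / 2).

Definition phiminus {R : realType} (d : nat) (l lambda a b : R) (z0 zv : 'rV[R]_d)
  : R :=
  ((d%:R - 1) / (l * Num.sqrt `|lambda|) *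
   (b / (- Num.sg lambda * b ^+ 2 + a ^+ 2 + dist2 zv z0))) `^ ((d%:R - 1) / 2).

Definition alphac {R : realType} (lambda a b : R) : R :=
  Num.sqrt `|lambda| * a / b.

Definition fpot {R : realType} (d : nat) (alpha : R) (p : R) : R :=
  - alpha * ((d%:R - 1) / (2 * d%:R)) * p `^ (2 * d%:R / (d%:R - 1)).

Definition expansion {R : realType} (d : nat) (l : R) (phi : 'rV[R]_d.+1 -> R)
  (zv : 'rV[R]_d) (phim c : R) : Prop :=
  (fun r : R =>
     (phi (pt (expR (- r / l)) zv)
      - expR (- ((d%:R - 1) * r / (2 * l))) * phim
      - c * expR (- ((d%:R + 1) * r / (2 * l))))
     / expR (- ((d%:R + 1) * r / (2 * l))))
  @ +oo --> (0 : R).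

From HB Require Import structures.
From mathcomp Require Import all_boot all_order all_algebra.
From mathcomp Require Import all_classical all_reals all_analysis.
From mathcomp Require Import ring lra.
Set Implicit Arguments.
Unset Strict Implicit.
Import Order.TTheory GRing.Theory Num.Theory.
Import numFieldNormedType.Exports.
Local Open Scope ring_scope.
Local Open Scope classical_set_scope.

(* With Q := -sg(lambda) b^2 + (z + a)^2 + |zv - z0|^2 and U := Q / z, the solution is
   phi = (B / U)^((d-1)/2) with B = (d-1) b / (l sqrt|lambda|).  On hyperbolic space the
   covariant Hessian of U is (U - 2a) g / l^2, and the coordinate gradient satisfies
   z^2 |grad U|^2 = U^2 - 4aU + 4 sg(lambda) b^2.
   Hence phi^(-2/(d-1)) = U / B has a Hessian proportional to the metric, so the trace-free
   tensor T vanishes; the metric is Einstein with Ric = -(d/l^2) g; and the scalar equation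
   becomes an algebraic identity in U, the constant term of |grad U|^2 producing the
   lambda phi^((d+3)/(d-1)) term.  At the boundary phi = z^((d-1)/2) G(z) with G smooth at
   z = 0 and G(0) = phi_-, so the coefficient of z^((d+1)/2) is G'(0) = -l alpha
   phi_-^((d+1)/(d-1)); such coefficients are unique, which gives hat pi and the boundary
   condition. *)

Section DirectionalDerivative.
Context {R : realType} {V : normedModType R}.
Implicit Types (f : V -> R) (x v : V).

Lemma derive_line f x v : 'D_v f x = 'D_1 (fun h : R => f (h *: v + x)) 0.
Proof.
rewrite /derive; do 2 f_equal; apply/funext => h /=.
by rewrite /shift /= !scale0r !add0r !addr0 [h *: (1 : R)]mulr1.
Qed.

Lemma is_derive_lineE f x v df :
  is_derive x v f df <-> is_derive (0 : R) 1 (fun h : R => f (h *: v + x)) df.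
Proof.
split=> [] [fxv Dfxv].
  apply: DeriveDef; first exact: (derivable1P f x v).1.
  by rewrite -derive_line.
apply: DeriveDef; first exact/derivable1P.
by rewrite derive_line.
Qed.

Lemma is_derive_inv {f x v df} :
  is_derive x v f df -> f x != 0 ->
  is_derive x v (fun y => (f y)^-1) (- (f x) ^- 2 * df).
Proof.
move=> [fxv <-] fx0; apply: DeriveDef; first exact: derivableV.
by rewrite deriveV.
Qed.

Lemma is_derive_bigsum {m} {h : 'I_m -> V -> R} {x v} {dh : 'I_m -> R} :
  (forall i, is_derive x v (h i) (dh i)) ->
  is_derive x v (fun y => \sum_(i < m) h i y) (\sum_(i < m) dh i).
Proof. by move=> hh; have := is_derive_sum hh; rewrite fct_sumE. Qed.

Lemma is_derive_powR {f x v df} r :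
  is_derive x v f df -> 0 < f x ->
  is_derive x v (fun y => f y `^ r) (r * f x `^ (r - 1) * df).
Proof.
move=> /is_derive_lineE hf fx_gt0; apply/is_derive_lineE.
set F := fun h : R => f (h *: v + x) in hf *.
have F0 : F 0 = f x by rewrite /F scale0r add0r.
have [Fd DF] := hf.
have [powd Dpow] : is_derive (F 0) 1 (@powR R ^~ r) (r * F 0 `^ (r - 1)).
  by apply: is_derive1_powR; rewrite F0.
have -> : (fun h => f (h *: v + x) `^ r) = (@powR R ^~ r) \o F by [].
apply: DeriveDef; first by apply/derivable1_diffP/differentiable_comp;
  apply/derivable1_diffP.
by rewrite -derive1E derive1_comp // !derive1E Dpow DF F0.
Qed.

End DirectionalDerivative.

Lemma gt0_powRD {R : realType} (x r s : R) : 0 < x -> x `^ (r + s) = x `^ r * x `^ s.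
Proof. by move=> x_gt0; rewrite powRD //; apply/implyP => _; exact: lt0r_neq0. Qed.

Lemma is_derive_coord {R : realType} {n : nat} (x v : 'rV[R]_n) (k : 'I_n) :
  is_derive x v (fun y : 'rV[R]_n => y ord0 k) (v ord0 k).
Proof.
apply/is_derive_lineE.
have -> : (fun h : R => (h *: v + x) ord0 k) = (fun h => h * v ord0 k + x ord0 k).
  by apply/funext => h; rewrite !mxE.
by apply: is_derive_eq; rewrite /GRing.scale /=; ring.
Qed.

Section Locality.
Context {R : realType} {n : nat}.
Implicit Types (f : 'rV[R]_n -> R) (g : 'rV[R]_n -> 'M[R]_n) (x : 'rV[R]_n).

Lemma hess_near_eq g f f' i j x : (\forall y \near x, f y = f' y) ->
  hess g f i j x = hess g f' i j x.
Proof.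
move=> ff'; have pd_eq k : pd f k x = pd f' k x by exact: near_eq_derive.
have pd2_eq : \forall y \near x, pd f j y = pd f' j y.
  by apply: filterS (nbhs_interior ff') => y; exact: near_eq_derive.
rewrite /hess; have -> : pd (pd f j) i x = pd (pd f' j) i x by exact: near_eq_derive pd2_eq.
by under eq_bigr do rewrite pd_eq.
Qed.

Lemma box_near_eq g f f' x : (\forall y \near x, f y = f' y) -> box g f x = box g f' x.
Proof.
move=> ff'; apply: eq_bigr => i _; apply: eq_bigr => j _.
by rewrite (hess_near_eq g i j ff').
Qed.

End Locality.

Section HyperbolicSpace.
Context {R : realType} {d : nat} (l : R).
Hypothesis l_neq0 : l != 0.
Notation n := d.+1.
Notation V := 'rV[R]_n.
Notation g := (@hypmetric R d l).

Definition kron (i j : 'I_n) : R := (i == j)%:R.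
Definition ev (i : 'I_n) : V := delta_mx 0 i.

Lemma ev_coord i k : ev i ord0 k = kron k i.
Proof. by rewrite /ev /kron mxE eqxx. Qed.

Lemma kronC i j : kron i j = kron j i.
Proof. by rewrite /kron eq_sym. Qed.

Lemma kronii i : kron i i = 1.
Proof. by rewrite /kron eqxx. Qed.

Lemma sum_kronr (F : 'I_n -> R) i : \sum_(k < n) F k * kron k i = F i.
Proof.
rewrite (bigD1 i) //= kronii mulr1 big1 ?addr0 // => k /negbTE ki.
by rewrite /kron ki mulr0.
Qed.

Lemma sum_kronl (F : 'I_n -> R) i : \sum_(k < n) kron i k * F k = F i.
Proof. by rewrite -[RHS](sum_kronr F i); apply: eq_bigr => k _; rewrite mulrC kronC. Qed.

Lemma sumr_const_ord (c : R) : \sum_(k < n) c = n%:R * c.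
Proof. by rewrite sumr_const card_ord mulr_natl. Qed.

Lemma hypmetric_entry y i j : g y i j = l ^+ 2 * ((zc y)^-1 * (zc y)^-1) * kron i j.
Proof. by rewrite /hypmetric mxE /kron mulr_natr expr2 invfM. Qed.

Lemma ginv_hypmetric y i j : ginv g y i j = zc y * zc y / l ^+ 2 * kron i j.
Proof. by rewrite /ginv /hypmetric invmx_scalar mxE /kron mulr_natr invf_div expr2. Qed.

Lemma sum_ginv_hypmetric (M : 'I_n -> 'I_n -> R) y :
  \sum_(i < n) \sum_(j < n) ginv g y i j * M i j = zc y * zc y / l ^+ 2 * \sum_(i < n) M i i.
Proof.
rewrite mulr_sumr; apply: eq_bigr => i _.
rewrite -(sum_kronr (fun j => zc y * zc y / l ^+ 2 * M i j) i).
by apply: eq_bigr => j _; rewrite ginv_hypmetric (kronC i j); ring.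
Qed.

Lemma is_derive_inv_zc (y : V) j : zc y != 0 ->
  is_derive y (ev j) (fun w => (zc w)^-1) (- (zc y) ^- 2 * kron j ord0).
Proof.
by move=> z_neq0; rewrite kronC -ev_coord; apply: is_derive_inv => //; exact: is_derive_coord.
Qed.

Lemma pd_hypmetric i j k y : zc y != 0 ->
  pd (fun w => g w i j) k y
  = -2 * l ^+ 2 * ((zc y)^-1 * (zc y)^-1 * (zc y)^-1) * kron i j * kron k ord0.
Proof.
move=> z_neq0.
have -> : (fun w => g w i j) = (fun w => l ^+ 2 * ((zc w)^-1 * (zc w)^-1) * kron i j).
  by apply/funext => w; rewrite hypmetric_entry.
suff [_ D] : is_derive y (ev k) (fun w => l ^+ 2 * ((zc w)^-1 * (zc w)^-1) * kron i j)
    (-2 * l ^+ 2 * ((zc y)^-1 * (zc y)^-1 * (zc y)^-1) * kron i j * kron k ord0).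
  exact: D.
have dinvz := is_derive_inv_zc k z_neq0.
by apply: is_derive_eq; rewrite /GRing.scale /= expr2 invfM; ring.
Qed.

(* The Christoffel symbols of l^2/z^2 (dz^2 + dz^i dz^i) are -1/z times these. *)
Definition gamma_hyp (k i j : 'I_n) : R :=
  kron k j * kron i ord0 + kron k i * kron j ord0 - kron i j * kron k ord0.

Lemma christoffel_hypmetric k i j y : christoffel g k i j y = - (zc y)^-1 * gamma_hyp k i j.
Proof.
have [z_eq0|z_neq0] := eqVneq (zc y) 0.
  rewrite /christoffel big1 ?mulr0 ?z_eq0 ?invr0 ?oppr0 ?mul0r // => m _.
  by rewrite ginv_hypmetric z_eq0 !mul0r.
rewrite /christoffel.
under eq_bigr => m _ do
  rewrite ginv_hypmetric !pd_hypmetric // (mulrC _ (kron k m)) -[kron k m * _ * _]mulrA.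
by rewrite sum_kronl /gamma_hyp; field; rewrite z_neq0 l_neq0.
Qed.

Lemma sum_gamma_hyp (D : 'I_n -> R) i j :
  \sum_(k < n) gamma_hyp k i j * D k
  = kron i ord0 * D j + kron j ord0 * D i - kron i j * D ord0.
Proof.
rewrite (eq_bigr (fun k => kron i ord0 * (D k * kron k j) + kron j ord0 * (D k * kron k i)
  - kron i j * (D k * kron k ord0))); last by move=> k _; rewrite /gamma_hyp; ring.
by rewrite sumrB big_split /= -!mulr_sumr !sum_kronr.
Qed.

Lemma gamma_hyp_trace_l k m : gamma_hyp k k m = kron m ord0.
Proof. rewrite /gamma_hyp kronii; ring. Qed.

Lemma gamma_hyp_trace_r k j : gamma_hyp k j k = kron j ord0.
Proof. rewrite /gamma_hyp kronii (kronC j k); ring. Qed.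

Lemma pd_christoffel_hypmetric k i j m x : zc x != 0 ->
  pd (christoffel g k i j) m x = (zc x)^-1 * (zc x)^-1 * kron m ord0 * gamma_hyp k i j.
Proof.
move=> z_neq0.
have -> : christoffel g k i j = (fun y => - (zc y)^-1 * gamma_hyp k i j).
  by apply/funext => y; rewrite christoffel_hypmetric.
suff [_ D] : is_derive x (ev m) (fun y => - (zc y)^-1 * gamma_hyp k i j)
  ((zc x)^-1 * (zc x)^-1 * kron m ord0 * gamma_hyp k i j).
  exact: D.
have dinvz := is_derive_inv_zc m z_neq0.
by apply: is_derive_eq; rewrite /GRing.scale /= expr2 invfM; ring.
Qed.

Lemma ricci_hypmetric i j x : zc x != 0 ->
  ricci g i j x = - d%:R * ((zc x)^-1 * (zc x)^-1) * kron i j.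
Proof.
move=> z_neq0; rewrite /ricci.
set iz2 := (zc x)^-1 * (zc x)^-1.
have quad1 k : \sum_(m < n) christoffel g k k m x * christoffel g m i j x
    = iz2 * gamma_hyp ord0 i j.
  under eq_bigr => m _ do rewrite !christoffel_hypmetric mulrACA mulrNN -/iz2
    gamma_hyp_trace_l (mulrC (kron m ord0)).
  by rewrite -mulr_sumr sum_kronr.
have quad2 k : \sum_(m < n) christoffel g k j m x * christoffel g m i k x
    = iz2 * (kron i ord0 * kron j ord0 + kron k ord0 * gamma_hyp k j i
             - kron i k * gamma_hyp k j ord0).
  under eq_bigr => m _ do rewrite !christoffel_hypmetric mulrACA mulrNN -/iz2
    (mulrC (gamma_hyp k j m)).
  by rewrite -mulr_sumr sum_gamma_hyp gamma_hyp_trace_r.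
under eq_bigr => k _ do rewrite sumrB quad1 quad2 !pd_christoffel_hypmetric // gamma_hyp_trace_r.
rewrite (eq_bigr (fun k => iz2 * (gamma_hyp k i j * kron k ord0)
    + (- iz2) * (gamma_hyp k j i * kron k ord0) + iz2 * (kron i k * gamma_hyp k j ord0)
    + iz2 * (gamma_hyp ord0 i j - 2 * (kron i ord0 * kron j ord0)))); last first.
  by move=> k _; rewrite /iz2; ring.
rewrite !big_split /= -!mulr_sumr !sum_kronr sumr_const_ord sum_kronl /gamma_hyp !kronii.
have [->|hi] := eqVneq i ord0; have [->|hj] := eqVneq j ord0;
  rewrite /kron ?eqxx ?(negbTE hi) ?(negbTE hj) ?(eq_sym ord0)
    ?(negbTE hi) ?(negbTE hj) /=; rewrite -[n%:R]natr1 ?(eq_sym j i); ring.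
Qed.

Lemma scalar_curv_hypmetric x : zc x != 0 ->
  scalar_curv g x = - (d%:R + 1) * d%:R / l ^+ 2.
Proof.
move=> z_neq0; rewrite /scalar_curv sum_ginv_hypmetric.
under eq_bigr => i _ do rewrite ricci_hypmetric // kronii.
by rewrite sumr_const_ord -[n%:R]natr1; field; rewrite z_neq0 l_neq0.
Qed.

Lemma einstein_hypmetric i j x : zc x != 0 ->
  ricci g i j x + d%:R / l ^+ 2 * g x i j = 0.
Proof.
by move=> z_neq0; rewrite ricci_hypmetric // hypmetric_entry; field; rewrite l_neq0 z_neq0.
Qed.

Lemma hess_hypmetric f i j x :
  hess g f i j x = pd (pd f j) i x
    + (zc x)^-1 * (kron i ord0 * pd f j x + kron j ord0 * pd f i x - kron i j * pd f ord0 x).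
Proof.
rewrite /hess; under eq_bigr => k _ do rewrite christoffel_hypmetric -mulrA.
by rewrite -mulr_sumr sum_gamma_hyp mulNr opprK.
Qed.

Lemma box_hypmetric f x : box g f x = zc x * zc x / l ^+ 2 * \sum_(i < n) hess g f i i x.
Proof. exact: sum_ginv_hypmetric. Qed.

Lemma tracefree_hess_hypmetric f x (c : R) : zc x != 0 ->
  (forall i j, hess g f i j x = c * kron i j) ->
  forall i j, hess g f i j x - (d%:R + 1)^-1 * g x i j * box g f x = 0.
Proof.
move=> z_neq0 hf i j; rewrite box_hypmetric.
under eq_bigr => k _ do rewrite hf kronii mulr1.
rewrite hf sumr_const_ord hypmetric_entry -[n%:R]natr1.
by field; rewrite z_neq0 l_neq0 natr1 pnatr_eq0.
Qed.

Lemma zc_pt (t : R) (zv : 'rV[R]_d) : zc (pt t zv) = t.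
Proof. by rewrite /zc /pt mxE unlift_none. Qed.

Lemma zvec_pt (t : R) (zv : 'rV[R]_d) : zvec (pt t zv) = zv.
Proof. by apply/rowP => i; rewrite /zvec /pt !mxE liftK. Qed.

End HyperbolicSpace.

Section ConformalProfile.
Context {R : realType} {d : nat}.
Variables (lam a b : R) (z0 : 'rV[R]_d).
Notation n := d.+1.
Notation V := 'rV[R]_n.

Definition ctr (i : 'I_n) : R := if unlift ord0 i is Some j then z0 ord0 j else - a.
Definition K0 : R := - Num.sg lam * b ^+ 2.
Definition Q (y : V) : R := K0 + \sum_(i < n) (y ord0 i - ctr i) ^+ 2.
Definition U (y : V) : R := Q y / zc y.

Lemma ctr0 : ctr ord0 = - a.
Proof. by rewrite /ctr unlift_none. Qed.

Lemma Q_zvec (y : V) : K0 + (zc y + a) ^+ 2 + dist2 (zvec y) z0 = Q y.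
Proof.
rewrite /Q big_ord_recl ctr0 /zc /dist2 opprK addrA; congr (_ + _).
by apply: eq_bigr => j _; rewrite /ctr liftK /zvec mxE.
Qed.

Lemma cvg_Q (y : V) : Q w @[w --> y] --> Q y.
Proof.
apply: cvgD; first exact: nbhs_filter.
  exact: (@cvg_cst _ K0 _ (nbhs y) (nbhs_filter y)).
apply: cvg_big => [||i _]; [exact: add_continuous|exact: nbhs_filter|].
have yi : w ord0 i @[w --> y] --> y ord0 i by exact: coord_continuous.
have yc := @cvg_cst _ (ctr i) _ (nbhs y) (nbhs_filter y).
have cvg_i : (w ord0 i - ctr i) @[w --> y] --> (y ord0 i - ctr i) by exact: (cvgB yi yc).
have -> : (fun w : V => (w ord0 i - ctr i) ^+ 2)
    = (fun w => (w ord0 i - ctr i) * (w ord0 i - ctr i)).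
  by apply/funext => w; rewrite expr2.
by rewrite expr2; exact: (cvgM cvg_i cvg_i).
Qed.

Definition dU (y : V) (j : 'I_n) : R :=
  2 * (y ord0 j - ctr j) * (zc y)^-1 - kron j ord0 * (Q y * ((zc y)^-1 * (zc y)^-1)).

Definition ddU (y : V) (i j : 'I_n) : R :=
  let iz := (zc y)^-1 in
  2 * kron j i * iz - 2 * (y ord0 j - ctr j) * (iz * iz) * kron i ord0
  - kron j ord0 * (2 * (y ord0 i - ctr i) * (iz * iz) - 2 * Q y * (iz * iz * iz) * kron i ord0).

Lemma is_derive_Q (y v : V) : is_derive y v Q (\sum_(i < n) 2 * (y ord0 i - ctr i) * v ord0 i).
Proof.
have dsq i : is_derive y v (fun w : V => (w ord0 i - ctr i) ^+ 2)
    (2 * (y ord0 i - ctr i) * v ord0 i).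
  have dc := is_derive_coord y v i.
  by apply: is_derive_eq; rewrite /GRing.scale /=; ring.
have dsum := is_derive_bigsum dsq.
by apply: is_derive_eq; rewrite /GRing.scale /= add0r.
Qed.

Lemma is_derive_U (y : V) j : zc y != 0 -> is_derive y (ev j) U (dU y j).
Proof.
move=> z_neq0; have dQ := is_derive_Q y (ev j); have dz := is_derive_inv_zc j z_neq0.
apply: is_derive_eq; rewrite /GRing.scale /=.
under eq_bigr => k _ do rewrite ev_coord.
by rewrite sum_kronr /dU expr2 invfM; ring.
Qed.

Lemma is_derive_dU (y : V) i j : zc y != 0 -> is_derive y (ev i) (fun w => dU w j) (ddU y i j).
Proof.
move=> z_neq0; have dQ := is_derive_Q y (ev i); have dz := is_derive_inv_zc i z_neq0.
have dc := is_derive_coord y (ev i) j.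
apply: is_derive_eq; rewrite /GRing.scale /=.
under eq_bigr => k _ do rewrite ev_coord.
by rewrite sum_kronr /ddU !ev_coord (kronC i ord0) expr2 invfM; ring.
Qed.

(* By [hess_hypmetric] the left side is the hyperbolic Hessian of U; it equals (U - 2a) g / l^2. *)
Lemma ddU_hyp (x : V) i j : zc x != 0 ->
  ddU x i j + (zc x)^-1 * (kron i ord0 * dU x j + kron j ord0 * dU x i - kron i j * dU x ord0)
  = (U x - 2 * a) * ((zc x)^-1 * (zc x)^-1) * kron i j.
Proof.
move=> z_neq0; rewrite /ddU /dU /U /=.
have [->|hi] := eqVneq i ord0; have [->|hj] := eqVneq j ord0;
  rewrite /kron ?eqxx ?(negbTE hi) ?(negbTE hj) ?(eq_sym ord0) ?(negbTE hi) ?(negbTE hj) /=;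
  by rewrite ?ctr0 ?(eq_sym j i) /zc; field.
Qed.

Lemma sum_dU2 (x : V) : zc x != 0 ->
  \sum_(i < n) dU x i ^+ 2 = (U x ^+ 2 - 4 * a * U x - 4 * K0) * ((zc x)^-1 * (zc x)^-1).
Proof.
move=> z_neq0; set iz := (zc x)^-1.
rewrite (eq_bigr (fun i => 4 * (iz * iz) * (x ord0 i - ctr i) ^+ 2
   + ((Q x) ^+ 2 * (iz * iz * iz * iz) - 4 * Q x * (iz * iz * iz) * (x ord0 i - ctr i))
     * kron i ord0)); last first.
  move=> i _; rewrite /dU -/iz.
  by have [->|hi] := eqVneq i ord0; rewrite /kron ?eqxx ?(negbTE hi) /=; ring.
rewrite big_split /= -mulr_sumr sum_kronr ctr0.
have -> : \sum_(i < n) (x ord0 i - ctr i) ^+ 2 = Q x - K0 by rewrite /Q; ring.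
by rewrite /U /iz /zc; field.
Qed.

Definition pos_region (y : V) : Prop := 0 < zc y /\ 0 < Q y.

Lemma pos_region_near y : pos_region y -> \forall w \near y, pos_region w.
Proof.
move=> [z_gt0 Q_gt0].
have cvg_z : zc w @[w --> y] --> zc y by exact: coord_continuous.
have zc_near := @cvgr_gt _ _ _ (nbhs_filter y) _ _ cvg_z 0 z_gt0.
have Q_near := @cvgr_gt _ _ _ (nbhs_filter y) _ _ (@cvg_Q y) 0 Q_gt0.
by near=> w; split; [near: w; exact: zc_near | near: w; exact: Q_near].
Unshelve. all: by end_near.
Qed.

Lemma pos_region_zc_neq0 {y} : pos_region y -> zc y != 0.
Proof. by case=> z_gt0 _; rewrite gt_eqF. Qed.

Lemma U_gt0 {y} : pos_region y -> 0 < U y.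
Proof. by case=> z_gt0 Q_gt0; rewrite divr_gt0. Qed.

(* near a point of [pos_region], phi and phi^(-2/(d-1)) are of this form *)
Definition powU (c r : R) (y : V) : R := c * U y `^ r.

Lemma is_derive_powU c r y j : pos_region y ->
  is_derive y (ev j) (powU c r) (c * (r * U y `^ (r - 1) * dU y j)).
Proof.
move=> yR; have dUr := is_derive_powR r (is_derive_U j (pos_region_zc_neq0 yR)) (U_gt0 yR).
by apply: is_derive_eq; rewrite /GRing.scale /=; ring.
Qed.

Lemma pd_powU c r y j : pos_region y -> pd (powU c r) j y = c * (r * U y `^ (r - 1) * dU y j).
Proof. by move=> yR; have [] := is_derive_powU c r j yR. Qed.

Lemma pdpd_powU c r x i j : pos_region x ->
  pd (pd (powU c r) j) i x = c * (r * (U x `^ (r - 1) * ddU x i j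
    + dU x j * ((r - 1) * U x `^ (r - 1 - 1) * dU x i))).
Proof.
move=> xR; have z_neq0 := pos_region_zc_neq0 xR.
have pd_near : \forall w \near x, c * (r * U w `^ (r - 1) * dU w j) = pd (powU c r) j w.
  by near=> w; rewrite pd_powU //; near: w; exact: pos_region_near.
have dUr := is_derive_powR (r - 1) (is_derive_U i z_neq0) (U_gt0 xR).
have d_dU := is_derive_dU i j z_neq0.
have D : is_derive x (ev i) (fun w => c * (r * U w `^ (r - 1) * dU w j))
    (c * (r * (U x `^ (r - 1) * ddU x i j + dU x j * ((r - 1) * U x `^ (r - 1 - 1) * dU x i)))).
  by apply: is_derive_eq; rewrite /GRing.scale /=; ring.
by have [] := near_eq_is_derive pd_near D.
Unshelve. all: by end_near.
Qed.

Variable l : R.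
Hypothesis l_neq0 : l != 0.
Notation g := (@hypmetric R d l).

Lemma hess_powU c r x i j : pos_region x ->
  hess g (powU c r) i j x
  = c * r * (U x `^ (r - 1) * ((U x - 2 * a) * ((zc x)^-1 * (zc x)^-1) * kron i j)
             + (r - 1) * U x `^ (r - 1 - 1) * (dU x i * dU x j)).
Proof.
move=> xR; have z_neq0 := pos_region_zc_neq0 xR.
rewrite hess_hypmetric // pdpd_powU // !pd_powU // -(ddU_hyp i j z_neq0); ring.
Qed.

Lemma box_powU c r x : pos_region x ->
  box g (powU c r) x
  = zc x * zc x / l ^+ 2 * (c * r * (U x `^ (r - 1)
      * (n%:R * ((U x - 2 * a) * ((zc x)^-1 * (zc x)^-1)))
    + (r - 1) * U x `^ (r - 1 - 1)
      * ((U x ^+ 2 - 4 * a * U x - 4 * K0) * ((zc x)^-1 * (zc x)^-1)))).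
Proof.
move=> xR; rewrite box_hypmetric //.
under eq_bigr => i _ do rewrite hess_powU // kronii mulr1 -[dU x i * _]expr2 mulrDr.
rewrite big_split /= sumr_const_ord -!mulr_sumr sum_dU2 ?pos_region_zc_neq0 //; ring.
Qed.

End ConformalProfile.

Section Asymptotics.
Context {R : realType} {d : nat}.
Variable l : R.
Hypothesis l_gt0 : 0 < l.

Lemma expR_cvg_at_right0 : expR (- r / l) @[r --> +oo] --> 0^'+.
Proof.
have to0 : expR (- r / l) @[r --> +oo] --> (0 : R).
  have -> : (fun r : R => expR (- r / l)) = (fun x => expR (- x)) \o (fun r => l^-1 * r).
    by apply/funext => r /=; rewrite mulNr mulrC.
  apply: cvg_comp; last exact: cvgr_expR.
  by apply: gt0_cvgMry; [rewrite invr_gt0 | exact: cvg_id].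
move=> A /to0.
change ((\forall r \near +oo, 0 < expR (- r / l) -> A (expR (- r / l))) ->
  \forall r \near +oo, A (expR (- r / l))).
by apply: filterS => r; apply; exact: expR_gt0.
Qed.

Lemma expansion_of_is_derive (phi : 'rV[R]_d.+1 -> R) zv (G : R -> R) (dG : R) :
  is_derive (0 : R) 1 G dG ->
  (\forall t \near 0^'+, phi (pt t zv) = t `^ ((d%:R - 1) / 2) * G t) ->
  expansion d l phi zv (G 0) dG.
Proof.
move=> [Gd <-] phiG.
have quot : (fun t => t^-1 * (G t - G 0)) @ 0^'+ --> 'D_1 G 0.
  have q0 : (fun t : R => t^-1 *: ((G \o shift 0) (t *: 1) - G 0)) @ 0^' --> 'D_1 G 0.
    exact: Gd.
  move=> A /q0.
  change ((\forall t \near 0, t != 0 -> A (t^-1 *: ((G \o shift 0) (t *: 1) - G 0))) ->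
    \forall t \near 0, 0 < t -> A (t^-1 * (G t - G 0))).
  apply: filterS => t A_t t_gt0; move: (A_t (lt0r_neq0 t_gt0)).
  by rewrite /= /shift /GRing.scale /= mulr1 addr0.
have e_cvg := cvg_comp _ _ expR_cvg_at_right0 quot.
have lim0 : (fun r => (expR (- r / l))^-1 * (G (expR (- r / l)) - G 0) - 'D_1 G 0)
    @ +oo --> (0 : R).
  have := cvgB e_cvg (cvg_cst ('D_1 G 0)).
  by rewrite subrr; apply.
(* the expansion quotient is the difference quotient of G at 0 taken at t = e^(-r/l) *)
apply: cvg_trans lim0; apply: near_eq_cvg; near=> r.
have -> : phi (pt (expR (- r / l)) zv) = expR (- r / l) `^ ((d%:R - 1) / 2) * G (expR (- r / l)).
  by near: r; exact: expR_cvg_at_right0 phiG.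
have -> : - ((d%:R - 1) * r / (2 * l)) = (- r / l) * ((d%:R - 1) / 2).
  by field; rewrite gt_eqF.
have -> : - ((d%:R + 1) * r / (2 * l)) = (- r / l) * ((d%:R - 1) / 2) + (- r / l).
  by field; rewrite gt_eqF.
rewrite expRD (expRM (- r / l)).
have e_gt0 : 0 < expR (- r / l) by exact: expR_gt0.
have ep_gt0 : 0 < expR (- r / l) `^ ((d%:R - 1) / 2) by exact: powR_gt0.
by field; rewrite !gt_eqF.
Unshelve. all: by end_near.
Qed.

Lemma expansion_unique (phi : 'rV[R]_d.+1 -> R) zv m c c' :
  expansion d l phi zv m c -> expansion d l phi zv m c' -> c = c'.
Proof.
move=> hc hc'.
pose q (k : R) r := (phi (pt (expR (- r / l)) zv) - expR (- ((d%:R - 1) * r / (2 * l))) * m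
  - k * expR (- ((d%:R + 1) * r / (2 * l)))) / expR (- ((d%:R + 1) * r / (2 * l))).
have lim0 : (fun r => q c' r - q c r) @ +oo --> (0 : R).
  by have := cvgB hc' hc; rewrite subrr; apply.
have diff : (fun _ : R => c - c') @ +oo --> (0 : R).
  apply: cvg_trans lim0; apply: near_eq_cvg; near=> r.
  have e_gt0 : 0 < expR (- ((d%:R + 1) * r / (2 * l))) by exact: expR_gt0.
  by rewrite /q; field; rewrite gt_eqF.
apply/eqP; rewrite -subr_eq0; apply/eqP.
exact: (cvg_unique _ (cvg_cst (c - c')) diff).
Unshelve. all: by end_near.
Qed.

End Asymptotics.

Lemma derive1_fpot {R : realType} (d : nat) (alpha m : R) : (1 < d)%N -> 0 < m ->
  derive1 (fpot d alpha) m = - alpha * m `^ ((d%:R + 1) / (d%:R - 1)).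
Proof.
move=> d_gt1 m_gt0.
have dm1_neq0 : d%:R - 1 != 0 :> R by rewrite subr_eq0 pnatr_eq1 gtn_eqF.
have d_neq0 : d%:R != 0 :> R by rewrite pnatr_eq0 -lt0n ltnW.
have dpow := is_derive1_powR (2 * d%:R / (d%:R - 1)) m_gt0.
have D : is_derive m 1 (fpot d alpha) (- alpha * m `^ ((d%:R + 1) / (d%:R - 1))).
  apply: is_derive_eq; rewrite /GRing.scale /=.
  have -> : 2 * d%:R / (d%:R - 1) - 1 = (d%:R + 1) / (d%:R - 1) :> R by field.
  by field; rewrite dm1_neq0 d_neq0.
by rewrite derive1E; have [_ ->] := D.
Qed.

Section Solution.
Context {R : realType} {d : nat}.
Variables (l lam a b : R) (z0 : 'rV[R]_d).
Hypotheses (l_gt0 : 0 < l) (lam_neq0 : lam != 0) (b_gt0 : 0 < b) (d_ge2 : (2 <= d)%N).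
Local Notation g := (@hypmetric R d l).
Local Notation phi := (phisol d l lam a b z0).
Local Notation dd := (d%:R : R).
Local Notation p := ((dd - 1) / 2).
Local Notation B := ((dd - 1) / (l * Num.sqrt `|lam|) * b).
Local Notation K0 := (K0 lam b).
Local Notation U := (U lam a b z0).
Local Notation pos_region := (pos_region lam a b z0).
Local Notation powU := (powU lam a b z0).

Let l_neq0 : l != 0. Proof. exact: lt0r_neq0. Qed.

Lemma dm1_gt0 : 0 < dd - 1.
Proof. by rewrite subr_gt0 ltr1n. Qed.

Lemma sqrt_lam_gt0 : 0 < Num.sqrt `|lam|.
Proof. by rewrite sqrtr_gt0 normr_gt0. Qed.

Lemma B_gt0 : 0 < B.
Proof. by rewrite mulr_gt0 // divr_gt0 ?dm1_gt0 // mulr_gt0 // sqrt_lam_gt0. Qed.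

Lemma Fsol_U y : Fsol d l lam a b z0 y = B / U y.
Proof. by rewrite /Fsol Q_zvec /U invf_div; ring. Qed.

Lemma pos_region_Fsol x : 0 < zc x -> 0 < Fsol d l lam a b z0 x -> pos_region x.
Proof.
move=> z_gt0; rewrite Fsol_U pmulr_rgt0 ?B_gt0 // invr_gt0 /U => QU_gt0.
by split => //; rewrite -(divfK (lt0r_neq0 z_gt0) (Q _ _ _ _ x)) mulr_gt0.
Qed.

Lemma phisol_powU y : pos_region y -> phi y = powU (B `^ p) (- p) y.
Proof.
move=> yR; have U_pos := U_gt0 yR.
rewrite /phisol Fsol_U /powU powRM ?invr_ge0 ?(ltW U_pos) ?(ltW B_gt0) //.
by rewrite -(powR_inv1 (ltW U_pos)) -powRrM mulN1r.
Qed.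

Lemma phisol_near y : pos_region y -> \forall w \near y, phi w = powU (B `^ p) (- p) w.
Proof. by move=> /pos_region_near; apply: filterS => w; exact: phisol_powU. Qed.

Lemma phisol_inv_near y : pos_region y ->
  \forall w \near y, phi w `^ (- (2 / (dd - 1))) = powU B^-1 1 w.
Proof.
move=> /pos_region_near; apply: filterS => w wR; have U_pos := U_gt0 wR.
rewrite /phisol -powRrM.
have -> : (dd - 1) / 2 * - (2 / (dd - 1)) = -1 by field; rewrite lt0r_neq0 // dm1_gt0.
rewrite powR_inv1; last by rewrite Fsol_U mulr_ge0 ?invr_ge0 ?(ltW U_pos) ?(ltW B_gt0).
by rewrite Fsol_U /powU powRr1 ?(ltW U_pos) // invfM invrK mulrC.
Qed.

Lemma stressT_sol kappa x mu nu : pos_region x -> stressT d kappa g phi mu nu x = 0.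
Proof.
move=> xR; have z_neq0 := pos_region_zc_neq0 xR.
have hess_psi i j : hess g (powU B^-1 1) i j x
    = B^-1 * ((U x - 2 * a) * ((zc x)^-1 * (zc x)^-1)) * kron i j.
  by rewrite hess_powU // subrr powRr0; ring.
rewrite /stressT /= (hess_near_eq g mu nu (phisol_inv_near xR)).
rewrite (box_near_eq g (phisol_inv_near xR)).
by rewrite (tracefree_hess_hypmetric l_neq0 z_neq0 hess_psi) mulr0.
Qed.

Lemma scalar_eq_sol x : pos_region x ->
  box g phi x - (dd - 1) / (4 * dd) * scalar_curv g x * phi x
    - (dd + 1) / (dd - 1) * lam * phi x `^ ((dd + 3) / (dd - 1)) = 0.
Proof.
move=> xR; have z_neq0 := pos_region_zc_neq0 xR; have U_pos := U_gt0 xR.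
have dm1_neq0 : dd - 1 != 0 := lt0r_neq0 dm1_gt0.
have d_neq0 : dd != 0 by rewrite pnatr_eq0 -lt0n ltnW.
have F_pos : 0 < Fsol d l lam a b z0 x by rewrite Fsol_U divr_gt0 ?B_gt0.
have phi_pow : phi x `^ ((dd + 3) / (dd - 1)) = phi x * (B / U x) ^+ 2.
  rewrite /phisol -powRrM.
  have -> : (dd - 1) / 2 * ((dd + 3) / (dd - 1)) = (dd - 1) / 2 + 2%:R by field.
  by rewrite gt0_powRD // (powR_mulrn 2 (ltW F_pos)) Fsol_U.
have U_pm1 : U x `^ (- p - 1) = U x `^ (- p) * (U x)^-1.
  by rewrite gt0_powRD // powR_inv1 ?(ltW U_pos).
have U_pm2 : U x `^ (- p - 1 - 1) = U x `^ (- p) * (U x)^-1 * (U x)^-1.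
  by rewrite gt0_powRD // U_pm1 powR_inv1 ?(ltW U_pos).
rewrite phi_pow (box_near_eq g (phisol_near xR)) box_powU // scalar_curv_hypmetric //.
rewrite phisol_powU // /powU U_pm2 U_pm1 /K0.
set u := U x in U_pos *; set q := Num.sqrt `|lam|; set sg := Num.sg lam.
have q_neq0 : q != 0 := lt0r_neq0 sqrt_lam_gt0.
have lam_sq : lam = sg * q ^+ 2 by rewrite /q sqr_sqrtr ?normr_ge0 // -numEsg.
clearbody u q sg; rewrite lam_sq -[d.+1%:R]natr1.
by field; rewrite z_neq0 q_neq0 l_neq0 dm1_neq0 d_neq0 lt0r_neq0.
Qed.

Lemma field_equations_sol kappa x : 0 < zc x -> 0 < Fsol d l lam a b z0 x ->
  (forall mu nu, stressT d kappa g phi mu nu x = 0) /\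
  (forall mu nu, ricci g mu nu x + dd / l ^+ 2 * g x mu nu = 0) /\
  box g phi x - (dd - 1) / (4 * dd) * scalar_curv g x * phi x
    - (dd + 1) / (dd - 1) * lam * phi x `^ ((dd + 3) / (dd - 1)) = 0.
Proof.
move=> z_gt0 F_gt0; have xR := pos_region_Fsol z_gt0 F_gt0.
split; first by move=> mu nu; exact: stressT_sol.
split; last exact: scalar_eq_sol.
by move=> mu nu; exact: einstein_hypmetric (lt0r_neq0 z_gt0).
Qed.

Local Notation Qt zv := (fun t => K0 + (t + a) ^+ 2 + dist2 zv z0).
Local Notation Gsol zv := (fun t => (B / (K0 + (t + a) ^+ 2 + dist2 zv z0)) `^ p).

Lemma phisol_pt zv t : 0 < t -> 0 < Qt zv t -> phi (pt t zv) = t `^ p * Gsol zv t.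
Proof.
move=> t_gt0 Q_gt0; rewrite /phisol /Fsol -powRM ?(ltW t_gt0) //.
  by congr (_ `^ _); rewrite zc_pt zvec_pt /K0; ring.
by rewrite divr_ge0 ?(ltW Q_gt0) ?(ltW B_gt0).
Qed.

Lemma is_derive_Qt zv (t : R) : is_derive t 1 (Qt zv) (2 * (t + a)).
Proof. by apply: is_derive_eq; rewrite /GRing.scale /=; ring. Qed.

Lemma is_derive_Gsol zv : 0 < Qt zv 0 ->
  is_derive (0 : R) 1 (Gsol zv) (- l * alphac lam a b * Gsol zv 0 `^ ((dd + 1) / (dd - 1))).
Proof.
move=> Q_gt0; have Q_neq0 := lt0r_neq0 Q_gt0.
have BQ_gt0 : 0 < B / Qt zv 0 by rewrite divr_gt0 ?B_gt0.
have dBQ : is_derive (0 : R) 1 (fun t => B / Qt zv t) (B * (- (Qt zv 0) ^- 2 * (2 * (0 + a)))).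
  have dinv := is_derive_inv (is_derive_Qt zv 0) Q_neq0.
  by apply: is_derive_eq; rewrite /GRing.scale /=; ring.
apply: is_derive_eq (is_derive_powR p dBQ BQ_gt0) _.
rewrite -powRrM.
have -> : p * ((dd + 1) / (dd - 1)) = p + 1 by field; rewrite lt0r_neq0 // dm1_gt0.
rewrite !gt0_powRD // powRr1 ?(ltW BQ_gt0) // powR_inv1 ?(ltW BQ_gt0) //.
rewrite /alphac add0r.
have q_neq0 := lt0r_neq0 sqrt_lam_gt0; rewrite add0r in Q_neq0.
by field; rewrite Q_neq0 q_neq0 l_neq0 !lt0r_neq0 ?dm1_gt0.
Qed.

Lemma expansion_sol zv : 0 < K0 + a ^+ 2 + dist2 zv z0 ->
  expansion d l phi zv (phiminus d l lam a b z0 zv)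
    (- l * alphac lam a b * phiminus d l lam a b z0 zv `^ ((dd + 1) / (dd - 1))).
Proof.
move=> Q_gt0; have Q0_gt0 : 0 < Qt zv 0 by rewrite add0r.
have -> : phiminus d l lam a b z0 zv = Gsol zv 0 by rewrite /phiminus add0r mulrA.
apply: (expansion_of_is_derive (d := d) (phi := phi) l_gt0 (is_derive_Gsol Q0_gt0)).
have Qt_cont : {for (0 : R), continuous (Qt zv)}.
  have [Qd _] := is_derive_Qt zv 0.
  by apply: differentiable_continuous; exact/derivable1_diffP.
have Q_near := @cvgr_gt _ _ _ (nbhs_filter (0 : R)) _ _ Qt_cont 0 Q0_gt0.
near=> t; apply: phisol_pt; near: t; first exact: nbhs_right_gt.
by apply: filterS Q_near => t Qt_pos _.
Unshelve. all: by end_near.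
Qed.

Lemma boundary_condition_sol zv phiplus : 0 < K0 + a ^+ 2 + dist2 zv z0 ->
  let phim := phiminus d l lam a b z0 zv in
  expansion d l phi zv phim phiplus ->
  let hatpi := - l^-1 * phiplus in
  hatpi = alphac lam a b * phim `^ ((dd + 1) / (dd - 1)) /\
  - hatpi - derive1 (fpot d (alphac lam a b)) phim = 0.
Proof.
move=> Q_gt0 phim exp_plus hatpi.
have phim_gt0 : 0 < phim by rewrite powR_gt0 // mulr_gt0 ?divr_gt0 ?dm1_gt0 ?mulr_gt0 ?sqrt_lam_gt0.
have hatpiE : hatpi = alphac lam a b * phim `^ ((dd + 1) / (dd - 1)).
  by rewrite /hatpi (expansion_unique exp_plus (expansion_sol Q_gt0)); field.
by split => //; rewrite derive1_fpot // hatpiE mulNr subrr.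
Qed.

End Solution.

Theorem mainTheorem12 (R : realType) (d : nat) (l lambda a b kappa : R)
  (z0 : 'rV[R]_d) :
  (2 <= d)%N -> 0 < l -> lambda != 0 -> 0 < b ->
  let g := @hypmetric R d l in
  let phi := phisol d l lambda a b z0 in
  let alpha := alphac lambda a b in
  (forall x : 'rV[R]_d.+1,
     0 < zc x -> 0 < Fsol d l lambda a b z0 x ->
     (forall mu nu, stressT d kappa g phi mu nu x = 0) /\
     (forall mu nu, ricci g mu nu x + d%:R / l ^+ 2 * g x mu nu = 0) /\
     box g phi x - (d%:R - 1) / (4 * d%:R) * scalar_curv g x * phi x
       - (d%:R + 1) / (d%:R - 1) * lambda
         * phi x `^ ((d%:R + 3) / (d%:R - 1)) = 0) /\
  (forall zv : 'rV[R]_d,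
     0 < - Num.sg lambda * b ^+ 2 + a ^+ 2 + dist2 zv z0 ->
     let phim := phiminus d l lambda a b z0 zv in
     expansion d l phi zv phim
       (- l * alpha * phim `^ ((d%:R + 1) / (d%:R - 1))) /\
     (forall phiplus : R, expansion d l phi zv phim phiplus ->
        let hatpi := - l^-1 * phiplus in
        hatpi = alpha * phim `^ ((d%:R + 1) / (d%:R - 1)) /\
        - hatpi - derive1 (fpot d alpha) phim = 0)).
Proof.
move=> d_ge2 l_gt0 lambda_neq0 b_gt0 g phi alpha; split.
  by move=> x z_gt0 F_gt0; exact: field_equations_sol.
move=> zv Q_gt0 phim; split; first exact: expansion_sol.
by move=> phiplus; exact: boundary_condition_sol.
Qed.
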